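(* Let $X$ be a countable compact metric space and $\alpha$ an ordinal such that the Cantor–Bendixson derivative $X^{(\alpha+1)}$ consists of exactly one point $q$. Let $f\colon X\to X$ be an expansive homeomorphism. Then $f$ has a nontrivial homoclinic point: there exists $x\in X$, $x\neq q$, such that $f^n(x)\to q$ as $n\to+\infty$ and as $n\to-\infty$.
   Context: The Cantor–Bendixson derivatives are defined by $X^{(0)}=X$, $X^{(\beta+1)}$ = the set of non-isolated points of $X^{(\beta)}$, and $X^{(\lambda)}=\bigcap_{\beta<\lambda}X^{(\beta)}$ for limit $\lambda$. A homeomorphism $f$ of a metric space $(X,d)$ is expansive if there is $c>0$ such that for all $x\neq y$ there is $n\in\mathbb Z$ with $d(f^n(x),f^n(y))>c$. *)

From Stdlib Require Import Reals ZArith List.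
Open Scope R_scope.

Definition is_metric {X : Type} (d : X -> X -> R) : Prop :=
  (forall x y, 0 <= d x y) /\
  (forall x y, d x y = 0 <-> x = y) /\
  (forall x y, d x y = d y x) /\
  (forall x y z, d x z <= d x y + d y z).

Definition open_set {X : Type} (d : X -> X -> R) (U : X -> Prop) : Prop :=
  forall x, U x -> exists e, 0 < e /\ forall y, d x y < e -> U y.

Definition compact_space {X : Type} (d : X -> X -> R) : Prop :=
  forall (J : Type) (U : J -> X -> Prop),
    (forall j, open_set d (U j)) ->
    (forall x, exists j, U j x) ->
    exists l : list J, forall x, exists j, In j l /\ U j x.

Definition countable_type (X : Type) : Prop :=
  exists g : X -> nat, forall x y, g x = g y -> x = y.

Definition isolated_in {X : Type} (d : X -> X -> R) (A : X -> Prop) (x : X) : Prop :=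
  A x /\ exists e, 0 < e /\ forall y, A y -> d x y < e -> y = x.

Definition derived {X : Type} (d : X -> X -> R) (A : X -> Prop) : X -> Prop :=
  fun x => A x /\ ~ isolated_in d A x.

(** A strict well-order on an index type I (I then represents an ordinal). *)
Definition strict_well_order {I : Type} (lt : I -> I -> Prop) : Prop :=
  well_founded lt /\
  (forall i j k, lt i j -> lt j k -> lt i k) /\
  (forall i j, lt i j \/ i = j \/ lt j i).

(** D is the Cantor--Bendixson hierarchy indexed by the well-order (I, lt):
    D i = intersection over j < i of the derived set of D j, with empty
    intersection = X.  This gives D(min) = X, D(j+1) = (D j)', and
    D(limit) = intersection of earlier D j. *)
Definition CB_hierarchy {X I : Type} (d : X -> X -> R) (lt : I -> I -> Prop)
    (D : I -> X -> Prop) : Prop :=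
  forall i x, D i x <-> (forall j, lt j i -> derived d (D j) x).

Definition continuous_map {X : Type} (d : X -> X -> R) (f : X -> X) : Prop :=
  forall x e, 0 < e -> exists del, 0 < del /\ forall y, d x y < del -> d (f x) (f y) < e.

Definition homeo_pair {X : Type} (d : X -> X -> R) (f g : X -> X) : Prop :=
  (forall x, g (f x) = x) /\ (forall x, f (g x) = x) /\
  continuous_map d f /\ continuous_map d g.

Definition iterZ {X : Type} (f g : X -> X) (n : Z) : X -> X :=
  match n with
  | Z0 => fun x => x
  | Zpos p => Nat.iter (Pos.to_nat p) f
  | Zneg p => Nat.iter (Pos.to_nat p) g
  end.

Definition expansive {X : Type} (d : X -> X -> R) (f g : X -> X) : Prop :=
  exists c, 0 < c /\ forall x y, x <> y ->
    exists n : Z, d (iterZ f g n x) (iterZ f g n y) > c.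

Definition conv_forward {X : Type} (d : X -> X -> R) (f g : X -> X) (x q : X) : Prop :=
  forall e, 0 < e -> exists N : Z, forall n : Z, (N <= n)%Z -> d (iterZ f g n x) q < e.

Definition conv_backward {X : Type} (d : X -> X -> R) (f g : X -> X) (x q : X) : Prop :=
  forall e, 0 < e -> exists N : Z, forall n : Z, (n <= N)%Z -> d (iterZ f g n x) q < e.

From Pilot Require Import Defs.
From Stdlib Require Import Reals ZArith List Lia Lra Classical.
Open Scope R_scope.

(* The set A := X^(a) is closed, invariant under f and has q as its only
   accumulation point, so by compactness only finitely many points of A lie
   outside any ball around q, while A itself is infinite.  If some x in A \ {q}
   is not periodic, its forward and backward orbits are injective sequences in
   A and hence converge to q.  Otherwise every point of A \ {q} is periodic;
   by expansivity against the fixed point q every such orbit meets the finite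
   set of points of A at distance > c from q, so the infinite set A \ {q}
   would be a finite union of finite orbits. *)

Definition periodic {X : Type} (f : X -> X) (x : X) : Prop :=
  exists p, (0 < p)%nat /\ Nat.iter p f x = x.

Section Iterates.
Variables (X : Type) (f g : X -> X).
Hypothesis gK : forall x, g (f x) = x.

Lemma iter_cancel n x : Nat.iter n g (Nat.iter n f x) = x.
Proof.
  revert x; induction n as [|n IH]; intros x; [reflexivity|].
  rewrite (Nat.iter_succ_r n X f), Nat.iter_succ, IH; apply gK.
Qed.

Lemma iter_injective_of_aperiodic x :
  ~ periodic f x -> forall n m, Nat.iter n f x = Nat.iter m f x -> n = m.
Proof.
  intros Hx.
  assert (Hshift : forall n k, Nat.iter n f x = Nat.iter (n + k) f x -> k = 0%nat).
  { intros n k E; destruct k as [|k]; [reflexivity|exfalso].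
    rewrite Nat.iter_add in E; apply (f_equal (Nat.iter n g)) in E.
    rewrite !iter_cancel in E; apply Hx; exists (S k); split; [lia|auto]. }
  intros n m E; destruct (Nat.lt_total n m) as [H|[H|H]]; [|exact H|].
  - replace m with (n + (m - n))%nat in E by lia; apply Hshift in E; lia.
  - replace n with (m + (n - m))%nat in E by lia; symmetry in E; apply Hshift in E; lia.
Qed.

End Iterates.

Lemma iter_fixpoint {X} (f : X -> X) q : f q = q -> forall n, Nat.iter n f q = q.
Proof. intros H n; induction n; simpl; congruence. Qed.

Lemma iter_stable {X} (f : X -> X) (B : X -> Prop) :
  (forall y, B y -> B (f y)) -> forall n y, B y -> B (Nat.iter n f y).
Proof. intros H n; induction n; intros y Hy; simpl; auto. Qed.

Lemma iter_mul_period {X} (f : X -> X) x p :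
  Nat.iter p f x = x -> forall k, Nat.iter (k * p) f x = x.
Proof.
  intros H k; induction k as [|k IH]; [reflexivity|].
  replace (S k * p)%nat with (p + k * p)%nat by lia.
  rewrite Nat.iter_add, IH; exact H.
Qed.

Lemma iter_mod_period {X} (f : X -> X) x p :
  (0 < p)%nat -> Nat.iter p f x = x ->
  forall j, Nat.iter j f x = Nat.iter (j mod p) f x.
Proof.
  intros Hp H j.
  transitivity (Nat.iter (j mod p + j / p * p) f x).
  - f_equal; pose proof (Nat.div_mod_eq j p); lia.
  - rewrite Nat.iter_add, iter_mul_period by exact H; reflexivity.
Qed.

Lemma periodic_orbits_finite {X} (f : X -> X) (l : list X) :
  exists l', forall y, In y l -> periodic f y -> forall j, In (Nat.iter j f y) l'.
Proof.
  induction l as [|y l [l' IH]]; [exists nil; intros y []|].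
  destruct (classic (periodic f y)) as [[p [Hp Ep]]|Hn].
  - exists (map (fun j => Nat.iter j f y) (seq 0 p) ++ l').
    intros z [<-|Hz] Pz j; apply in_or_app.
    + left; rewrite (iter_mod_period f y p Hp Ep j).
      apply (in_map (fun k => Nat.iter k f y)), in_seq.
      pose proof (Nat.mod_upper_bound j p ltac:(lia)); lia.
    + right; auto.
  - exists l'; intros z [<-|Hz] Pz j; [contradiction|auto].
Qed.

Lemma iterZ_nonneg {X} (f g : X -> X) n x :
  (0 <= n)%Z -> iterZ f g n x = Nat.iter (Z.to_nat n) f x.
Proof. destruct n; intros; try reflexivity; lia. Qed.

Lemma iterZ_nonpos {X} (f g : X -> X) n x :
  (n <= 0)%Z -> iterZ f g n x = Nat.iter (Z.to_nat (- n)) g x.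
Proof. destruct n; intros; try reflexivity; lia. Qed.

Lemma iterZ_fixpoint {X} (f g : X -> X) q :
  f q = q -> g q = q -> forall n, iterZ f g n q = q.
Proof. intros Hf Hg [|p|p]; simpl; [reflexivity|apply iter_fixpoint..]; assumption. Qed.

Lemma iterZ_stable {X} (f g : X -> X) (B : X -> Prop) :
  (forall y, B y -> B (f y)) -> (forall y, B y -> B (g y)) ->
  forall n y, B y -> B (iterZ f g n y).
Proof. intros Hf Hg [|p|p] y Hy; simpl; [exact Hy|apply iter_stable..]; assumption. Qed.

Lemma periodic_iterZ_returns {X} (f g : X -> X) x :
  (forall y, f (g y) = y) -> periodic f x ->
  forall n, exists j, Nat.iter j f (iterZ f g n x) = x.
Proof.
  intros fK [p [Hp Ep]] [|k|k]; simpl.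
  - exists 0%nat; reflexivity.
  - exists ((p - 1) * Pos.to_nat k)%nat; rewrite <- Nat.iter_add.
    replace ((p - 1) * Pos.to_nat k + Pos.to_nat k)%nat with (Pos.to_nat k * p)%nat by nia.
    apply iter_mul_period, Ep.
  - exists (Pos.to_nat k); apply iter_cancel, fK.
Qed.

Lemma injective_seq_eventually_avoids {X} (s : nat -> X) :
  (forall n m, s n = s m -> n = m) ->
  forall l : list X, exists N, forall n, (N <= n)%nat -> ~ In (s n) l.
Proof.
  intros inj l; induction l as [|y l [N IH]]; [exists 0%nat; intros n _ []|].
  destruct (classic (exists n0, s n0 = y)) as [[n0 E]|NE].
  - exists (Nat.max N (S n0)); intros n Hn [E'|Hin].
    + subst y; apply inj in E'; lia.
    + apply (IH n); [lia|exact Hin].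
  - exists N; intros n Hn [E'|Hin]; [apply NE; exists n; auto|exact (IH n Hn Hin)].
Qed.

Definition closed_set {X : Type} (d : X -> X -> R) (A : X -> Prop) : Prop :=
  forall z, (forall e, 0 < e -> exists y, A y /\ d z y < e) -> A z.

Section Metric.
Variables (X : Type) (d : X -> X -> R).
Hypothesis Hm : is_metric d.

Lemma ball_open (x : X) (e : R) : Defs.open_set d (fun y => d x y < e).
Proof.
  destruct Hm as [_ [_ [_ Htri]]]; intros y Hy; exists (e - d x y); split; [lra|].
  intros z Hz; specialize (Htri x y z); lra.
Qed.

Lemma dist_self x : d x x = 0.
Proof. destruct Hm as [_ [H _]]; apply H; reflexivity. Qed.

Lemma dist_pos x y : x <> y -> 0 < d x y.
Proof.
  destruct Hm as [H0 [H1 _]]; intros Hxy.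
  destruct (Rle_lt_or_eq_dec 0 (d x y) (H0 x y)) as [H|H]; [exact H|].
  exfalso; apply Hxy, H1; auto.
Qed.

(* Compactness of the whole space, applied to the cover by the isolating balls. *)
Lemma compact_discrete_finite :
  compact_space d -> forall F : X -> Prop,
  (forall z, exists e, 0 < e /\ forall y, F y -> d z y < e -> y = z) ->
  exists l, forall y, F y -> In y l.
Proof.
  intros Hc F HF.
  set (J := {p : X * R | 0 < snd p /\ forall y, F y -> d (fst p) y < snd p -> y = fst p}).
  destruct (Hc J (fun j y => d (fst (proj1_sig j)) y < snd (proj1_sig j))) as [l Hl].
  - intros j; apply ball_open.
  - intros x; destruct (HF x) as [e [He Hx]].
    exists (exist _ (x, e) (conj He Hx)); simpl; rewrite dist_self; exact He.
  - exists (map (fun j : J => fst (proj1_sig j)) l); intros y Fy.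
    destruct (Hl y) as [[[x e] [He Hx]] [Hj Uj]].
    apply in_map_iff; eexists; split; [|exact Hj]; simpl in *; symmetry; auto.
Qed.

Lemma list_min_dist q (l : list X) :
  exists e, 0 < e /\ forall y, In y l -> y <> q -> e <= d q y.
Proof.
  induction l as [|y l [e [He IH]]]; [exists 1; split; [lra|intros y []]|].
  destruct (classic (y = q)) as [->|Nq].
  - exists e; split; [exact He|]; intros z [<-|Hz] Nz; [contradiction|auto].
  - pose proof (dist_pos q y (not_eq_sym Nq)).
    exists (Rmin e (d q y)); split; [apply Rmin_glb_lt; lra|].
    intros z [<-|Hz] Nz; [apply Rmin_r|eapply Rle_trans; [apply Rmin_l|auto]].
Qed.

Lemma isolated_in_image (B : X -> Prop) (h h' : X -> X) x :
  continuous_map d h' -> (forall x, h' (h x) = x) -> (forall w, h (h' w) = w) ->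
  (forall w, B w -> B (h' w)) -> isolated_in d B x -> B (h x) ->
  isolated_in d B (h x).
Proof.
  intros Hc K1 K2 HB [Bx [e [He Hi]]] Bhx; split; [exact Bhx|].
  destruct (Hc (h x) e He) as [del [Hdel Hd]]; exists del; split; [exact Hdel|].
  intros w Bw Dw; specialize (Hd w Dw); rewrite K1 in Hd.
  rewrite <- (Hi (h' w) (HB w Bw) Hd); symmetry; apply K2.
Qed.

Lemma derived_invariant (B : X -> Prop) f g :
  homeo_pair d f g -> (forall y, B y <-> B (f y)) ->
  forall x, derived d B x <-> derived d B (f x).
Proof.
  intros [K1 [K2 [Cf Cg]]] HB x.
  assert (HBf : forall w, B w -> B (f w)) by (intros w; apply HB).
  assert (HBg : forall w, B w -> B (g w)) by (intros w Bw; apply HB; rewrite K2; exact Bw).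
  split; intros [Bx Ni].
  - split; [exact (HBf x Bx)|]; intro Is; apply Ni.
    pose proof (isolated_in_image B g f (f x) Cf K2 K1 HBf Is) as T.
    rewrite K1 in T; exact (T Bx).
  - split; [exact (proj2 (HB x) Bx)|]; intro Is; apply Ni.
    exact (isolated_in_image B f g x Cg K1 K2 HBg Is Bx).
Qed.

Lemma derived_of_accumulation (A : X -> Prop) z :
  closed_set d A ->
  (forall e, 0 < e -> exists y, A y /\ y <> z /\ d z y < e) -> derived d A z.
Proof.
  intros HA Hz; split.
  - apply HA; intros e He; destruct (Hz e He) as [y [Ay [_ Hy]]]; eauto.
  - intros [_ [e [He Hiso]]]; destruct (Hz e He) as [y [Ay [Nyz Hy]]].
    exact (Nyz (Hiso y Ay Hy)).
Qed.

Section CantorBendixson.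
Variables (I : Type) (lt : I -> I -> Prop) (D : I -> X -> Prop).
Hypothesis wf : well_founded lt.
Hypothesis HD : CB_hierarchy d lt D.

Lemma CB_hierarchy_closed i : closed_set d (D i).
Proof.
  induction i as [i IH] using (well_founded_ind wf); intros z Hz.
  destruct (classic (D i z)) as [Hi|Hn]; [exact Hi|].
  apply HD; intros j Hj.
  assert (Dj : forall y, D i y -> D j y) by (intros y Dy; exact (proj1 (proj1 (HD i y) Dy j Hj))).
  apply derived_of_accumulation; [exact (IH j Hj)|].
  intros e He; destruct (Hz e He) as [y [Dy Hy]].
  exists y; repeat split; auto; intros ->; exact (Hn Dy).
Qed.

Lemma CB_hierarchy_invariant f g :
  homeo_pair d f g -> forall i x, D i x <-> D i (f x).
Proof.
  intros Hh i; induction i as [i IH] using (well_founded_ind wf); intros x.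
  split; intros H; apply HD; intros j Hj.
  - apply (proj1 (derived_invariant (D j) f g Hh (IH j Hj) x)); exact (proj1 (HD i _) H j Hj).
  - apply (proj2 (derived_invariant (D j) f g Hh (IH j Hj) x)); exact (proj1 (HD i _) H j Hj).
Qed.

End CantorBendixson.

Section SingleAccumulationPoint.
Variables (A : X -> Prop) (q : X).
Hypothesis A_closed : closed_set d A.
Hypothesis A_derived : forall x, derived d A x <-> x = q.

Lemma far_points_finite :
  compact_space d -> forall e, 0 < e -> exists l, forall y, A y -> e <= d q y -> In y l.
Proof.
  intros Hc e He.
  destruct (compact_discrete_finite Hc (fun y => A y /\ e <= d q y)) as [l Hl];
    [|exists l; auto].
  intros z; apply NNPP; intro Hnot.
  assert (Acc : forall e', 0 < e' -> exists y, (A y /\ e <= d q y) /\ y <> z /\ d z y < e').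
  { intros e' He'; apply NNPP; intro Hn; apply Hnot; exists e'; split; [exact He'|].
    intros y Fy Dy; apply NNPP; intro Hyz; apply Hn; eauto. }
  assert (Hzq : z = q).
  { apply A_derived, derived_of_accumulation; [exact A_closed|].
    intros e' He'; destruct (Acc e' He') as [y [[Ay _] Hy]]; eauto. }
  subst z; destruct (Acc e He) as [y [[_ Ey] [_ Dy]]]; lra.
Qed.

Lemma exists_point_outside_list (l : list X) : exists y, A y /\ y <> q /\ ~ In y l.
Proof.
  destruct (list_min_dist q l) as [e [He Hmin]].
  apply NNPP; intro Hn.
  destruct (proj2 (A_derived q) eq_refl) as [Aq Niso]; apply Niso.
  split; [exact Aq|]; exists e; split; [exact He|].
  intros y Ay Dy; apply NNPP; intro Nq.
  destruct (classic (In y l)) as [Iy|Niy]; [specialize (Hmin y Iy Nq); lra|eauto].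
Qed.

End SingleAccumulationPoint.

Section Orbits.
Variables (f g : X -> X) (A : X -> Prop) (q : X).
Hypothesis gK : forall x, g (f x) = x.
Hypothesis fK : forall x, f (g x) = x.
Hypothesis A_f : forall y, A y -> A (f y).
Hypothesis A_g : forall y, A y -> A (g y).
Hypothesis far_finite : forall e, 0 < e -> exists l, forall y, A y -> e <= d q y -> In y l.

Lemma injective_seq_converges (s : nat -> X) :
  (forall n m, s n = s m -> n = m) -> (forall n, A (s n)) ->
  forall e, 0 < e -> exists N, forall n, (N <= n)%nat -> d (s n) q < e.
Proof.
  destruct Hm as [_ [_ [Hsym _]]]; intros inj As e He.
  destruct (far_finite e He) as [l Hl].
  destruct (injective_seq_eventually_avoids s inj l) as [N HN].
  exists N; intros n Hn; apply Rnot_le_lt; intro Hle.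
  apply (HN n Hn), Hl; [apply As|rewrite Hsym; exact Hle].
Qed.

Lemma aperiodic_homoclinic x :
  A x -> ~ periodic f x -> conv_forward d f g x q /\ conv_backward d f g x q.
Proof.
  intros Ax Hx.
  assert (Hgx : ~ periodic g x).
  { intros [p [Hp Ep]]; apply Hx; exists p; split; [exact Hp|].
    rewrite <- Ep at 1; apply iter_cancel, fK. }
  split; intros e He.
  - destruct (injective_seq_converges (fun k => Nat.iter k f x)
                (iter_injective_of_aperiodic X f g gK x Hx)
                (fun k => iter_stable f A A_f k x Ax) e He) as [N HN].
    exists (Z.of_nat N); intros n Hn; rewrite iterZ_nonneg by lia; apply HN; lia.
  - destruct (injective_seq_converges (fun k => Nat.iter k g x)
                (iter_injective_of_aperiodic X g f fK x Hgx)
                (fun k => iter_stable g A A_g k x Ax) e He) as [N HN].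
    exists (- Z.of_nat N)%Z; intros n Hn; rewrite iterZ_nonpos by lia; apply HN; lia.
Qed.

Lemma not_all_periodic (c : R) :
  0 < c -> (forall x, x <> q -> exists n, c < d (iterZ f g n x) q) ->
  (forall l, exists y, A y /\ y <> q /\ ~ In y l) ->
  ~ (forall x, A x -> x <> q -> periodic f x).
Proof.
  destruct Hm as [_ [_ [Hsym _]]]; intros Hc Hexp Hinf Hper.
  destruct (far_finite c Hc) as [F HF].
  destruct (periodic_orbits_finite f F) as [l' Hl'].
  destruct (Hinf l') as [x [Ax [Nx Nin]]]; apply Nin.
  destruct (Hexp x Nx) as [n Hn].
  set (y := iterZ f g n x) in Hn.
  assert (Ay : A y) by (apply iterZ_stable; assumption).
  assert (Ny : y <> q) by (intros E; rewrite E, dist_self in Hn; lra).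
  destruct (periodic_iterZ_returns f g x fK (Hper x Ax Nx) n) as [j Ej]; rewrite <- Ej.
  apply Hl'; [apply HF; [exact Ay|rewrite Hsym; apply Rlt_le, Hn]|exact (Hper y Ay Ny)].
Qed.

End Orbits.

Lemma expansive_at_fixpoint f g q :
  expansive d f g -> f q = q -> g q = q ->
  exists c, 0 < c /\ forall x, x <> q -> exists n, c < d (iterZ f g n x) q.
Proof.
  intros [c [Hc Hexp]] Hf Hg; exists c; split; [exact Hc|].
  intros x Nx; destruct (Hexp x q Nx) as [n Hn]; exists n.
  rewrite (iterZ_fixpoint f g q Hf Hg) in Hn; exact Hn.
Qed.

End Metric.

Theorem mainTheorem16 :
  forall (X : Type) (d : X -> X -> R),
    is_metric d -> compact_space d -> countable_type X ->
  forall (I : Type) (lt : I -> I -> Prop) (D : I -> X -> Prop) (a : I) (q : X),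
    strict_well_order lt -> CB_hierarchy d lt D ->
    (forall x, derived d (D a) x <-> x = q) ->
  forall f g : X -> X,
    homeo_pair d f g -> expansive d f g ->
    exists x : X, x <> q /\ conv_forward d f g x q /\ conv_backward d f g x q.
Proof.
  intros X d Hm Hc _ I lt D a q [wf _] HD Hq f g Hh Hexp.
  pose proof Hh as [gK [fK _]].
  set (A := D a) in Hq.
  assert (A_inv : forall y, A y <-> A (f y))
    by exact (CB_hierarchy_invariant X d I lt D wf HD f g Hh a).
  assert (A_f : forall y, A y -> A (f y)) by (intros y; apply A_inv).
  assert (A_g : forall y, A y -> A (g y)) by (intros y Ay; apply A_inv; rewrite fK; exact Ay).
  assert (A_closed : closed_set d A) by exact (CB_hierarchy_closed X d I lt D wf HD a).
  assert (Hfq : f q = q)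
    by (apply Hq, (proj1 (derived_invariant X d A f g Hh A_inv q)), Hq; reflexivity).
  assert (Hgq : g q = q) by (rewrite <- Hfq at 1; apply gK).
  pose proof (far_points_finite X d Hm A q A_closed Hq Hc) as far.
  destruct (expansive_at_fixpoint X d f g q Hexp Hfq Hgq) as [c [Hc0 Hexp_q]].
  destruct (classic (exists x, A x /\ x <> q /\ ~ periodic f x)) as [[x [Ax [Nx Hx]]]|Hper].
  - exists x; split; [exact Nx|].
    exact (aperiodic_homoclinic X d Hm f g A q gK fK A_f A_g far x Ax Hx).
  - exfalso; apply (not_all_periodic X d Hm f g A q fK A_f A_g far c Hc0 Hexp_q
                     (exists_point_outside_list X d Hm A q Hq)).
    intros x Ax Nx; apply NNPP; intro Hx; apply Hper; eauto.
Qed.
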